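(* Let $G$ be a group of order $q$ in which the discrete logarithm problem is hard, and let $g,h$ be randomly chosen generators of $G$. For rounds $k=1,\dots,l$, let participant $P_i$ hold $K_i^{(k)},r_i^{(k)}\in\mathbb{Z}_q$ and commitment $c_i^{(k)}=g^{K_i^{(k)}}h^{r_i^{(k)}}$, and let its ciphertext of round $k$ be $O_i^{(k)}\in\mathbb{Z}_q$, which encodes the message $O_i^{(k)}-K_i^{(k)}$ (encoding no message if this equals $0$). If a poly-time participant $P_i$ generates $(O_i^{(1)},c_i^{(1)}),\dots,(O_i^{(l)},c_i^{(l)})$ and $P_i$ knows $\alpha\in\mathbb{Z}_q$ such that \[ \bigwedge_{k=2}^{l}\left(\left(c_i^{(1)}\prod_{j=2}^{k}(c_i^{(j)})^{-1}=g^{O_i^{(1)}-\sum_{j=2}^{k}O_i^{(j)}}h^{\alpha}\right)\vee\left(c_i^{(k)}=g^{O_i^{(k)}}h^{\alpha}\right)\right), \] then at most one ciphertext among $O_i^{(2)},\dots,O_i^{(l)}$ encodes the same message as $O_i^{(1)}$, while the other ciphertexts among $O_i^{(2)},\dots,O_i^{(l)}$ encode no message.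
   Context: Setting: dining cryptographers protocol with Pedersen commitments. In each round $k$, each pair $P_i,P_j$ shares $K_{ij}^{(k)},r_{ij}^{(k)}\in\mathbb{Z}_q$ with $K_{ji}^{(k)}=-K_{ij}^{(k)}$, $r_{ji}^{(k)}=-r_{ij}^{(k)}$; $K_i^{(k)}=\sum_j K_{ij}^{(k)}$, $r_i^{(k)}=\sum_j r_{ij}^{(k)}$, $c_i^{(k)}=\prod_j g^{K_{ij}^{(k)}}h^{r_{ij}^{(k)}}$. ''Poly-time'' means probabilistic polynomial-time, unable (by the discrete logarithm assumption) to compute $\log_h g$. *)

From HB Require Import structures.
From mathcomp Require Import all_boot all_order all_algebra all_fingroup.
Set Implicit Arguments. Unset Strict Implicit. Unset Printing Implicit Defensive.
Import GRing.Theory.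
Local Open Scope ring_scope.

(* Message encoded by ciphertext O under key K (both in Z_q):
   O - K, with 0 meaning "no message". *)
Definition msg (q : nat) (O K : 'Z_q) : 'Z_q := O - K.

Definition at_most_one_repeat (q : nat) (l : nat) (O K : nat -> 'Z_q) : Prop :=
  (forall k, (2 <= k <= l)%N -> msg (O k) (K k) = 0 \/ msg (O k) (K k) = msg (O 1%N) (K 1%N))
  /\ (forall k k', (2 <= k <= l)%N -> (2 <= k' <= l)%N ->
        msg (O k) (K k) != 0 -> msg (O k') (K k') != 0 -> k = k').

(* Computational content of the discrete-logarithm assumption: a pair (a, b)
   of exponents with a <> 0 and g^a = h^b; from such a pair, log_h g = b/a is
   obtained (for prime q) by a poly-time computation.  A poly-time party
   cannot produce such a pair from values it knows. *)
Definition reveals_dlog (gT : finGroupType) (q : nat) (g h : gT) (a b : 'Z_q) : Prop :=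
  a != 0 /\ (g ^+ (a : nat) = h ^+ (b : nat))%g.

(* A Pedersen commitment opened in two ways, g^a h^b = g^a' h^b' with a <> a',
   reveals the discrete-logarithm relation g^(a - a') = h^(b' - b).  So unless
   P_i reveals such a relation, each disjunct of the hypothesis forces the k-th
   message to be 0 or the messages of rounds 2..k to sum to the first message.
   Once such a prefix sum reaches the first message it stays there, so at most
   one later message is nonzero, and that one equals the first message. *)

From HB Require Import structures.
From mathcomp Require Import all_boot all_order all_algebra all_fingroup.
From mathcomp Require Import ring.
From Stdlib Require Import Classical_Prop.
Import GRing.Theory.
Local Open Scope ring_scope.

Section ZpExponents.
Variables (gT : finGroupType) (q : nat) (x : gT).
Hypotheses (q_gt1 : (1 < q)%N) (x_q : (x ^+ q = 1)%g).

Lemma expg_ZpD (a b : 'Z_q) : (x ^+ ((a + b)%R : 'Z_q) = x ^+ a * x ^+ b)%g.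
Proof.
have mod_q n : (n %% (Zp_trunc q).+2 = n %% q)%N by rewrite Zp_cast.
by rewrite -expgD -[RHS](expg_mod _ x_q) /= mod_q.
Qed.

Lemma expg_ZpN (a : 'Z_q) : (x ^+ ((- a)%R : 'Z_q) = (x ^+ a)^-1)%g.
Proof. by apply/eqP; rewrite eq_sym eq_invg_mul -expg_ZpD subrr. Qed.

End ZpExponents.

Section Pedersen.
Context {gT : finGroupType} {q : nat}.
Variables g h : gT.
Hypotheses (q_gt1 : (1 < q)%N) (g_q : (g ^+ q = 1)%g) (h_q : (h ^+ q = 1)%g).
Hypothesis commute_gT : forall x y : gT, commute x y.

Definition pedersen (a b : 'Z_q) : gT := (g ^+ a * h ^+ b)%g.

Lemma pedersenD (a b a' b' : 'Z_q) :
  pedersen (a + a') (b + b') = (pedersen a b * pedersen a' b')%g.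
Proof.
rewrite /pedersen !expg_ZpD // -!mulgA; congr (_ * _)%g.
by rewrite !mulgA (commute_gT (h ^+ b)).
Qed.

Lemma pedersenN (a b : 'Z_q) : pedersen (- a) (- b) = (pedersen a b)^-1%g.
Proof. by rewrite /pedersen !expg_ZpN // invMg commute_gT. Qed.

Lemma pedersen_sum (m n : nat) (a b : nat -> 'Z_q) :
  pedersen (\sum_(m <= j < n) a j) (\sum_(m <= j < n) b j)
  = (\prod_(m <= j < n) pedersen (a j) (b j))%g.
Proof.
apply: (big_rec3 (fun s t p => pedersen s t = p)); first by rewrite /pedersen mulg1.
by move=> j s t p _ <-; rewrite pedersenD.
Qed.

Lemma pedersen_binding (a b a' b' : 'Z_q) :
  pedersen a b = pedersen a' b' -> (g ^+ ((a - a')%R : 'Z_q) = h ^+ ((b' - b)%R : 'Z_q))%g.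
Proof.
rewrite /pedersen !expg_ZpD // !expg_ZpN // => E.
have -> : (g ^+ a = g ^+ a' * h ^+ b' * (h ^+ b)^-1)%g by rewrite -E mulgK.
by rewrite -!mulgA commute_gT -mulgA mulgKV.
Qed.

Lemma pedersen_quotient (m n : nat) (a0 b0 : 'Z_q) (a b : nat -> 'Z_q) :
  (pedersen a0 b0 * \prod_(m <= j < n) (pedersen (a j) (b j))^-1)%g
  = pedersen (a0 - \sum_(m <= j < n) a j) (b0 - \sum_(m <= j < n) b j).
Proof.
rewrite pedersenD -!sumrN pedersen_sum; congr (_ * _)%g.
by apply: eq_bigr => j _; rewrite pedersenN.
Qed.

Lemma zero_or_reveals_dlog (a b : 'Z_q) :
  (g ^+ a = h ^+ b)%g -> a = 0 \/ reveals_dlog g h a b.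
Proof. by have [|] := eqVneq a 0; [left | right]. Qed.

End Pedersen.

Section RepeatedMessage.
Variables (R : zmodType) (l : nat) (m : nat -> R) (t : R).

Let S k := \sum_(2 <= j < k.+1) m j.

Hypothesis zero_or_sum : forall k, (2 <= k <= l)%N -> m k = 0 \/ S k = t.

Lemma partial_sum_stays (k n : nat) :
  (2 <= k)%N -> (k <= n <= l)%N -> S k = t -> S n = t.
Proof.
move=> k_ge2 + Sk; elim: n => [|n IH] /andP[k_le_n n_le_l].
  by case: k k_ge2 k_le_n Sk.
case: (ltngtP k n.+1) k_le_n => [|//|<- //]; rewrite ltnS => k_le_n _.
have Sn : S n = t by apply: IH; rewrite k_le_n ltnW.
have n_ge2 : (2 <= n.+1)%N by rewrite (leq_trans k_ge2) // ltnW.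
case: (zero_or_sum n.+1) => [|m0|//]; first by rewrite n_ge2.
by rewrite /S big_nat_recr //= m0 addr0.
Qed.

Lemma sum_eq_of_nonzero (k : nat) : (2 <= k <= l)%N -> m k != 0 -> S k = t.
Proof. by move=> /zero_or_sum[/eqP->|]. Qed.

Lemma nonzero_after_nonzero (k k' : nat) :
  (2 <= k)%N -> (k < k' <= l)%N -> m k != 0 -> m k' = 0.
Proof.
case: k' => [|n] k_ge2 /andP[k_lt n_lt_l] mk; first by [].
have Sk : S k = t by apply: sum_eq_of_nonzero mk; rewrite k_ge2 ltnW // (leq_trans k_lt).
have Sn : S n = t by apply: (partial_sum_stays _ _ k_ge2 _ Sk); rewrite -ltnS k_lt ltnW.
have n_ge2 : (2 <= n.+1)%N by rewrite (leq_trans k_ge2) // ltnW.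
case: (zero_or_sum n.+1) => [|//|]; first by rewrite n_ge2.
by rewrite /S big_nat_recr //= -/(S n) Sn -{2}[t]addr0 => /addrI.
Qed.

Lemma nonzero_eq (k : nat) : (2 <= k <= l)%N -> m k != 0 -> m k = t.
Proof.
move=> /[dup] k_range /andP[k_ge2 _] mk.
rewrite -(sum_eq_of_nonzero _ k_range mk) /S big_nat_recr //=.
rewrite big_nat_cond big1 ?add0r // => j /andP[/andP[j_ge2 j_lt_k] _].
apply/eqP; apply: contraTT mk => mj.
by rewrite (nonzero_after_nonzero _ _ j_ge2 _ mj) ?eqxx // j_lt_k; case/andP: k_range.
Qed.

Lemma nonzero_unique (k k' : nat) : (2 <= k <= l)%N -> (2 <= k' <= l)%N ->
  m k != 0 -> m k' != 0 -> k = k'.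
Proof.
move=> /andP[k_ge2 k_le] /andP[k'_ge2 k'_le] mk mk'.
case: (ltngtP k k') => [lt|lt|//].
  by move: mk'; rewrite (nonzero_after_nonzero _ _ k_ge2 _ mk) ?eqxx // lt.
by move: mk; rewrite (nonzero_after_nonzero _ _ k'_ge2 _ mk') ?eqxx // lt.
Qed.

End RepeatedMessage.

Lemma at_most_one_repeat_of_sums (q l : nat) (O K : nat -> 'Z_q) :
  (forall k, (2 <= k <= l)%N -> msg (O k) (K k) = 0
     \/ \sum_(2 <= j < k.+1) msg (O j) (K j) = msg (O 1%N) (K 1%N)) ->
  at_most_one_repeat l O K.
Proof.
move=> zero_or_sum; split; last exact: nonzero_unique zero_or_sum.
move=> k k_range; have [|mk] := eqVneq (msg (O k) (K k)) 0; first by left.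
by right; apply: nonzero_eq zero_or_sum _ k_range mk.
Qed.

Section Round.
Context {gT : finGroupType} {q : nat} {g h : gT} {l : nat}.
Context {K r O : nat -> 'Z_q} {c : nat -> gT} {alpha : 'Z_q}.
Hypotheses (q_gt1 : (1 < q)%N) (g_q : (g ^+ q = 1)%g) (h_q : (h ^+ q = 1)%g).
Hypothesis commute_gT : forall x y : gT, commute x y.
Hypothesis c_def : forall k, (1 <= k <= l)%N -> c k = pedersen g h (K k) (r k).

Lemma opened_round (k : nat) : (1 <= k <= l)%N ->
  c k = pedersen g h (O k) alpha ->
  msg (O k) (K k) = 0 \/ reveals_dlog g h (K k - O k) (alpha - r k).
Proof.
move=> k_range; rewrite c_def // => /(pedersen_binding _ _ q_gt1 g_q h_q commute_gT).
case/zero_or_reveals_dlog=> [KO0|]; last by right.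
by left; rewrite /msg -opprB KO0 oppr0.
Qed.

Lemma opened_difference_round (k : nat) : (2 <= k <= l)%N ->
  (c 1%N * \prod_(2 <= j < k.+1) (c j)^-1)%g
    = pedersen g h (O 1%N - \sum_(2 <= j < k.+1) O j) alpha ->
  \sum_(2 <= j < k.+1) msg (O j) (K j) = msg (O 1%N) (K 1%N)
  \/ reveals_dlog g h ((K 1%N - \sum_(2 <= j < k.+1) K j) - (O 1%N - \sum_(2 <= j < k.+1) O j))
                      (alpha - (r 1%N - \sum_(2 <= j < k.+1) r j)).
Proof.
move=> /andP[k_ge2 k_le_l].
have c1 : c 1%N = pedersen g h (K 1%N) (r 1%N).
  by apply: c_def; rewrite (leq_trans _ k_le_l) // ltnW.
have cj : (\prod_(2 <= j < k.+1) (c j)^-1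
           = \prod_(2 <= j < k.+1) (pedersen g h (K j) (r j))^-1)%g.
  apply: eq_big_nat => j /andP[j_ge2 j_le_k].
  by rewrite c_def // (ltnW j_ge2) -ltnS (leq_trans j_le_k).
rewrite c1 cj pedersen_quotient //.
move=> /(pedersen_binding _ _ q_gt1 g_q h_q commute_gT).
case/zero_or_reveals_dlog=> [diff0|]; last by right.
by left; apply/eqP; rewrite /msg sumrB -subr_eq0 -[X in _ == X]diff0; apply/eqP; ring.
Qed.

End Round.

Lemma forall_or_exists {T : Type} {R P Q : T -> Prop} :
  (forall k, R k -> P k \/ Q k) ->
  (forall k, R k -> P k) \/ exists k, R k /\ Q k.
Proof.
move=> PQ; case: (classic (exists k, R k /\ Q k)) => [|noQ]; first by right.
left=> k Rk; case: (PQ k Rk) => // Qk.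
by case: noQ; exists k.
Qed.

Theorem theorem3 (gT : finGroupType) (q : nat) (Hq : q = #|gT|) (Hq1 : (1 < q)%N)
  (g h : gT) (Hg : <[g]>%g = [set: gT]) (Hh : <[h]>%g = [set: gT])
  (l : nat) (K r O : nat -> 'Z_q) (c : nat -> gT)
  (Hc : forall k, (1 <= k <= l)%N -> c k = (g ^+ (K k : nat) * h ^+ (r k : nat))%g)
  (alpha : 'Z_q)
  (Hcond : forall k, (2 <= k <= l)%N ->
     (c 1%N * \prod_(2 <= j < k.+1) (c j)^-1
        = g ^+ ((O 1%N - \sum_(2 <= j < k.+1) O j)%R : nat) * h ^+ (alpha : nat))%g
     \/ c k = (g ^+ (O k : nat) * h ^+ (alpha : nat))%g) :
  at_most_one_repeat l O K
  \/ exists k, (2 <= k <= l)%N /\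
       ( reveals_dlog g h ((K 1%N - \sum_(2 <= j < k.+1) K j) - (O 1%N - \sum_(2 <= j < k.+1) O j))
                          (alpha - (r 1%N - \sum_(2 <= j < k.+1) r j))
       \/ reveals_dlog g h (K k - O k) (alpha - r k) ).
Proof.
have generator_q (x : gT) : <[x]>%g = [set: gT] -> (x ^+ q = 1)%g.
  by move=> gen_x; rewrite Hq -cardsT -gen_x expg_order.
have [g_q h_q] := (generator_q g Hg, generator_q h Hh).
have commute_gT (x y : gT) : commute x y.
  by apply: (centsP (cycle_abelian g)); rewrite Hg inE.
have c_def : forall k, (1 <= k <= l)%N -> c k = pedersen g h (K k) (r k) := Hc.
have round k : (2 <= k <= l)%N ->
    (msg (O k) (K k) = 0
     \/ \sum_(2 <= j < k.+1) msg (O j) (K j) = msg (O 1%N) (K 1%N))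
  \/ ( reveals_dlog g h ((K 1%N - \sum_(2 <= j < k.+1) K j) - (O 1%N - \sum_(2 <= j < k.+1) O j))
                        (alpha - (r 1%N - \sum_(2 <= j < k.+1) r j))
     \/ reveals_dlog g h (K k - O k) (alpha - r k) ).
  move=> k_range; have k_ge1 : (1 <= k <= l)%N by case/andP: k_range => /ltnW -> ->.
  case: (Hcond k k_range).
    by case/(opened_difference_round Hq1 g_q h_q commute_gT c_def k k_range); tauto.
  by case/(opened_round Hq1 g_q h_q commute_gT c_def k k_ge1); tauto.
case: (forall_or_exists round) => [zero_or_sum|]; last by right.
by left; apply: at_most_one_repeat_of_sums.
Qed.
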